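(* For the Steiner tree problem with revenues, budgets and hop constraints (STPRBH), the partial-ordering model (P-STPRBH) is strictly stronger than the assignment model (A-STPRBH): for every STPRBH instance the LP relaxation values satisfy $\nu_{\text{P-STPRBH}}\le\nu_{\text{A-STPRBH}}$, and there exist STPRBH instances for which this inequality is strict.
   Context: STPRBH instance: a complete undirected graph $G=(V,E)$ with edge costs $c:E\to\mathbb{R}_{>0}$, node revenues $\rho:V\to\mathbb{R}_{\ge0}$, a root $r\in V$, a hop limit $H\ge1$ and a budget $B\ge0$. For every ordered pair $(u,v)$ of distinct nodes there is a variable $x_{u,v}$. Common $x$-constraints: (X1) $\sum_{u\neq v}x_{u,v}\le1$ for all $v\in V$; (X2) $\sum_{u\in V\setminus\{v,w\}}x_{u,v}\ge x_{v,w}$ for all $v\in V\setminus\{r\}$, $w\neq v$; (X3) $0\le x_{u,v}\le1$; (X5) $\sum_{uv\in E}c_{uv}(x_{u,v}+x_{v,u})\le B$. $\mathcal{P}^{STPRBH}$: all $(x,l,g)$ (with $l_{v,i},g_{i,v}$ for $v\in V$, $i=0,\dots,H$) satisfying (X1)–(X3),(X5) and $l_{r,0}=g_{0,r}=0$; $l_{v,1}=g_{H,v}=0$ for $v\neq r$; $l_{v,i}\le l_{v,i+1}$ and $g_{i,v}+l_{v,i+1}=1$ for $v\in V$, $i=0,\dots,H-1$; $l_{u,i}+g_{i,v}\ge x_{u,v}$ for $u\neq v$, $i=0,\dots,H$; $0\le l,g\le1$. $\mathcal{A}^{STPRBH}$: all $(x,y)$ (with $y_{v,i}$ for $v\in V$,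 $i=0,\dots,H$) satisfying (X1)–(X3),(X5) and $y_{r,0}=1$; $y_{r,i}=0$ for $i\ge1$; $y_{v,0}=0$ and $\sum_{i=1}^Hy_{v,i}=1$ for $v\neq r$; $y_{u,i}-y_{v,i+1}+x_{u,v}\le1$ for $u\neq v$, $i=0,\dots,H-1$; $y_{u,H}+x_{u,v}\le1$ for $u\neq v$; $0\le y\le1$. (A-STPRBH) and (P-STPRBH) maximize $\rho_r+\sum_{uv\in E}(x_{u,v}\rho_v+x_{v,u}\rho_u)$ over the integral points of $\mathcal{A}^{STPRBH}$ and $\mathcal{P}^{STPRBH}$ respectively. $\nu_M$ is the optimal value of the LP relaxation of ILP $M$. For a maximization problem, model $A$ is stronger than $B$ if $\nu_A\le\nu_B$ on all instances, and strictly stronger if moreover strict inequality holds for some instance. *)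

From HB Require Import structures.
From mathcomp Require Import all_boot all_order all_algebra.
From mathcomp Require Import boolp classical_sets reals.
Set Implicit Arguments. Unset Strict Implicit. Unset Printing Implicit Defensive.
Import Order.TTheory GRing.Theory Num.Theory.
Local Open Scope ring_scope.
Local Open Scope classical_set_scope.

Section STPRBH.
Variable R : realType.

(* Edge costs c u v are read for the edge uv with u < v;
   x u v is the variable x_{u,v} (diagonal entries unused).
   Layered variables l v i, g i v, y v i are indexed by i : nat, only
   i = 0..H is constrained (other indices are irrelevant dummies). *)

Definition is_instance n (c : 'I_n -> 'I_n -> R) (rho : 'I_n -> R)
    (H : nat) (B : R) : Prop :=
  [/\ forall u v : 'I_n, u != v -> 0 < c u v,
      forall v, 0 <= rho v, (1 <= H)%N & 0 <= B].

Definition objective n (rho : 'I_n -> R) (r : 'I_n) (x : 'I_n -> 'I_n -> R) : R :=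
  rho r + \sum_(u : 'I_n) \sum_(v : 'I_n | (u < v)%N) (x u v * rho v + x v u * rho u).

Definition x_constraints n (c : 'I_n -> 'I_n -> R) (r : 'I_n) (B : R)
    (x : 'I_n -> 'I_n -> R) : Prop :=
  [/\ forall v : 'I_n, \sum_(u : 'I_n | u != v) x u v <= 1,
      forall v w : 'I_n, v != r -> w != v ->
                 x v w <= \sum_(u : 'I_n | (u != v) && (u != w)) x u v,
      forall u v : 'I_n, u != v -> 0 <= x u v <= 1 &
      \sum_(u : 'I_n) \sum_(v : 'I_n | (u < v)%N) c u v * (x u v + x v u) <= B].

Definition in_P n (c : 'I_n -> 'I_n -> R) (r : 'I_n) (H : nat) (B : R)
    (x : 'I_n -> 'I_n -> R) (l : 'I_n -> nat -> R) (g : nat -> 'I_n -> R) : Prop :=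
  [/\ x_constraints c r B x /\ (l r 0%N = 0 /\ g 0%N r = 0),
      forall v : 'I_n, v != r -> l v 1%N = 0 /\ g H v = 0,
      forall (v : 'I_n) (i : nat), (i < H)%N ->
        l v i <= l v i.+1 /\ g i v + l v i.+1 = 1,
      forall (u v : 'I_n) (i : nat), u != v -> (i <= H)%N -> x u v <= l u i + g i v &
      forall (v : 'I_n) (i : nat), (i <= H)%N -> (0 <= l v i <= 1) /\ (0 <= g i v <= 1)].

Definition in_A n (c : 'I_n -> 'I_n -> R) (r : 'I_n) (H : nat) (B : R)
    (x : 'I_n -> 'I_n -> R) (y : 'I_n -> nat -> R) : Prop :=
  [/\ x_constraints c r B x /\
      (y r 0%N = 1 /\ (forall i, (1 <= i <= H)%N -> y r i = 0)),
      forall v : 'I_n, v != r -> y v 0%N = 0 /\ \sum_(1 <= i < H.+1) y v i = 1,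
      forall (u v : 'I_n) (i : nat), u != v -> (i < H)%N -> y u i - y v i.+1 + x u v <= 1,
      forall u v : 'I_n, u != v -> y u H + x u v <= 1 &
      forall (v : 'I_n) (i : nat), (i <= H)%N -> 0 <= y v i <= 1].

Definition nu_P n c rho r H B : R :=
  sup [set objective rho r x | x in
        [set x | exists l g, @in_P n c r H B x l g]].

Definition nu_A n c rho r H B : R :=
  sup [set objective rho r x | x in
        [set x | exists y, @in_A n c r H B x y]].

End STPRBH.

From HB Require Import structures.
From mathcomp Require Import all_boot all_order all_algebra.
From mathcomp Require Import boolp classical_sets reals.
From mathcomp Require Import lra.
Import Order.TTheory GRing.Theory Num.Theory.
Local Open Scope ring_scope.
Local Open Scope classical_set_scope.
Set Implicit Arguments. Unset Strict Implicit. Unset Printing Implicit Defensive.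

(* Given a point (x, l, g) of the partial-ordering polytope, we build an
   assignment y with the same x level by level: y_{v,k+1} is the larger of the
   mass forced on v by the constraints y_{u,k} - y_{v,k+1} + x_{u,v} <= 1 and
   the mass v still needs in order to be fully assigned by level H; the
   variables l_{v,k} bound how much of v may sit at level k.  The cumulative
   mass of v stays below the inflow from its predecessors, which is at most
   sum_u x_{u,v} <= 1 by (X1).  The inequality is strict
   because no arc of a point of P enters the root
   (x_{u,r} <= l_{u,0} + g_{0,r} = 0), while A allows the fractional 3-cycle
   through the root with x = 1/2 on each arc, collecting revenue 3/2 > 1. *)

Lemma max0_subD (R : realDomainType) (a b s : R) :
  0 <= a -> 0 <= b -> 0 <= s ->
  Num.max 0 (a - s) + Num.max 0 (b - s) <= Num.max 0 (a + b - s).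
Proof.
move=> *; rewrite !maxEle.
by case: (leP 0 (a - s)) => ?; case: (leP 0 (b - s)) => ?;
  case: (leP 0 (a + b - s)) => ?; lra.
Qed.

Lemma sup_ge0 (R : realType) (T : set R) :
  (forall z, T z -> 0 <= z) -> 0 <= sup T.
Proof.
move=> T_ge0; have [supT|/sup_out->//] := pselect (has_sup T).
by have [[z Tz] _] := supT; exact: le_trans (T_ge0 z Tz) (sup_upper_bound supT Tz).
Qed.

Lemma le_sup_subset (R : realType) (S T : set R) (M : R) :
  S `<=` T -> (forall z, T z -> 0 <= z <= M) -> sup S <= sup T.
Proof.
move=> ST T_bnd; have [->|/set0P[z Sz]] := eqVneq S set0.
  by rewrite sup0; apply: sup_ge0 => z /T_bnd /andP[].
apply: sup_le; [exact: subset_trans ST (@le_down _ T) | by exists z |].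
by split; [exists z; exact: ST | exists M => w /T_bnd /andP[]].
Qed.

Section Objective.
Variables (R : realType) (n : nat) (rho : 'I_n -> R) (r : 'I_n).

Definition objective_ub : R :=
  rho r + \sum_(u : 'I_n) \sum_(v : 'I_n | (u < v)%N) (rho v + rho u).

Variable x : 'I_n -> 'I_n -> R.

Lemma objective_bounds :
  (forall v, 0 <= rho v) -> (forall u v, u != v -> 0 <= x u v <= 1) ->
  0 <= objective rho r x <= objective_ub.
Proof.
move=> rho_ge0 x_box; rewrite /objective /objective_ub lerD2l; apply/andP; split.
  apply: addr_ge0 => //; apply: sumr_ge0 => u _; apply: sumr_ge0 => v uv.
  have /andP[uv0 _] : 0 <= x u v <= 1 by apply: x_box; rewrite neq_ltn uv.
  have /andP[vu0 _] : 0 <= x v u <= 1 by apply: x_box; rewrite neq_ltn uv orbT.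
  by apply: addr_ge0; apply: mulr_ge0.
apply: ler_sum => u _; apply: ler_sum => v uv.
have /andP[_ uv1] : 0 <= x u v <= 1 by apply: x_box; rewrite neq_ltn uv.
have /andP[_ vu1] : 0 <= x v u <= 1 by apply: x_box; rewrite neq_ltn uv orbT.
by apply: lerD; rewrite -[leRHS]mul1r; apply: ler_wpM2r.
Qed.

Lemma objective_root_revenue :
  (forall v, v != r -> rho v = 0) -> (forall u, u != r -> x u r = 0) ->
  objective rho r x = rho r.
Proof.
move=> rho0 x_root; rewrite /objective big1 ?addr0 // => u _.
rewrite big1 // => v uv; have [vr|vr] := eqVneq v r.
  have ur : u != r by rewrite -vr neq_ltn uv.
  by rewrite vr x_root // (rho0 u) // mul0r mulr0 addr0.
rewrite rho0 // mulr0 add0r.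
by have [->|ur] := eqVneq u r; [rewrite x_root // mul0r | rewrite rho0 // mulr0].
Qed.

End Objective.

Lemma in_A_box (R : realType) n c r H B (x : 'I_n -> 'I_n -> R) y :
  in_A c r H B x y -> forall u v, u != v -> 0 <= x u v <= 1.
Proof. by case=> [[[_ _ x_box _] _] _ _ _ _]. Qed.

Section Assignment.
Variables (R : realType) (n : nat) (r : 'I_n) (H : nat).
Variables (x : 'I_n -> 'I_n -> R) (l : 'I_n -> nat -> R).

(* By level k, v must have accumulated mass at least [1 - slack v k]; since
   [slack v H = 0], v is then fully assigned at level H. *)
Definition slack (v : 'I_n) (k : nat) : R := \sum_(k.+1 <= j < H.+1) (1 - l v j).

Definition forced_mass (y : 'I_n -> R) (v : 'I_n) : R :=
  \big[Num.max/0]_(u | u != v) (y u - (1 - x u v)).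

Definition inflow (Y : 'I_n -> R) (v : 'I_n) : R :=
  \sum_(u | u != v) Num.max 0 (Y u - (1 - x u v)).

Definition next_layer (y Y : 'I_n -> R) (k : nat) (v : 'I_n) : R :=
  if v == r then 0 else Num.max (forced_mass y v) (1 - Y v - slack v k).

Definition root_mass (v : 'I_n) : R := (v == r)%:R.

Fixpoint layers (k : nat) : ('I_n -> R) * ('I_n -> R) :=
  if k is k'.+1 then
    let: (y, Y) := layers k' in (next_layer y Y k, fun v => Y v + next_layer y Y k v)
  else (root_mass, root_mass).

Definition layer k := (layers k).1.
Definition reached k := (layers k).2.
Definition before k v := reached k v - layer k v.

Lemma layer0 : layer 0 = root_mass.
Proof. by []. Qed.

Lemma layerS k : layer k.+1 = next_layer (layer k) (reached k) k.+1.
Proof. by rewrite /layer /reached /=; case: (layers k). Qed.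

Lemma reachedS k v : reached k.+1 v = reached k v + layer k.+1 v.
Proof. by rewrite layerS /layer /reached /=; case: (layers k). Qed.

Lemma beforeS k : before k.+1 = reached k.
Proof. by apply: funext => v; rewrite /before reachedS addrK. Qed.

Lemma reached_sum k v : reached k v = \sum_(0 <= i < k.+1) layer i v.
Proof.
elim: k => [|k IHk]; first by rewrite big_nat1.
by rewrite reachedS IHk [in RHS]big_nat_recr.
Qed.

Lemma slack_last v : slack v H = 0.
Proof. by rewrite /slack big_geq. Qed.

Lemma slackS v k : (k < H)%N -> slack v k = (1 - l v k.+1) + slack v k.+1.
Proof. by move=> kH; rewrite /slack big_ltn // ltnS. Qed.

Lemma forced_mass_ge0 y v : 0 <= forced_mass y v.
Proof. exact: bigmax_ge_id. Qed.

Lemma le_forced_mass y u v : u != v -> y u - (1 - x u v) <= forced_mass y v.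
Proof. by move=> uv; apply: le_bigmax_cond. Qed.

Lemma inflow_ge0 Y v : 0 <= inflow Y v.
Proof. by apply: sumr_ge0 => u _; rewrite le_max lexx. Qed.

Lemma forced_mass_le_inflow y v : forced_mass y v <= inflow y v.
Proof.
apply: bigmax_le; first exact: inflow_ge0.
move=> u uv; rewrite /inflow (bigD1 u) //=.
apply: le_trans (_ : Num.max 0 (y u - (1 - x u v)) <= _).
  by rewrite le_max lexx orbT.
by rewrite lerDl; apply: sumr_ge0 => w _; rewrite le_max lexx.
Qed.

Variables (c : 'I_n -> 'I_n -> R) (B : R) (g : nat -> 'I_n -> R).
Hypothesis P_lgx : in_P c r H B x l g.
Hypothesis H_ge1 : (1 <= H)%N.

Lemma P_x_constraints : x_constraints c r B x.
Proof. by case: P_lgx => [[]]. Qed.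

Lemma P_x_box u v : u != v -> 0 <= x u v <= 1.
Proof. by case: P_x_constraints => _ _ x_box _; apply: x_box. Qed.

Lemma P_l_box v i : (i <= H)%N -> 0 <= l v i <= 1.
Proof. by case: P_lgx => _ _ _ _ lg_box iH; case: (lg_box v i iH). Qed.

Lemma P_l_root0 : l r 0 = 0.
Proof. by case: P_lgx => [[_ []]]. Qed.

Lemma P_l1 v : v != r -> l v 1 = 0.
Proof. by case: P_lgx => _ lg_nonroot _ _ _ vr; case: (lg_nonroot v vr). Qed.

Lemma P_x_le_next u v k : u != v -> (k < H)%N -> x u v <= l u k + (1 - l v k.+1).
Proof.
case: P_lgx => _ _ lg_step x_le _ uv kH.
by have [_ glS] := lg_step v k kH; have := x_le u v k uv (ltnW kH); lra.
Qed.

Lemma P_x_le_last u v : u != v -> v != r -> x u v <= l u H.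
Proof.
case: P_lgx => _ lg_nonroot _ x_le _ uv vr.
by have [_ gH] := lg_nonroot v vr; have := x_le u v H uv (leqnn H); rewrite gH addr0.
Qed.

Lemma P_x_to_root u : u != r -> x u r = 0.
Proof.
case: P_lgx => [[_ [_ g0r]] _ lg_step x_le _ ur].
have [l01 _] := lg_step u 0%N H_ge1.
have := x_le u r 0%N ur (leq0n H); have /andP[x_ge0 _] := P_x_box ur.
by rewrite g0r addr0 P_l1 // in l01 *; lra.
Qed.

Lemma slack_ge0 v k : 0 <= slack v k.
Proof.
rewrite /slack big_seq_cond; apply: sumr_ge0 => j /andP[]; rewrite mem_index_iota.
by move=> /andP[_ jH] _; have /andP[_ ?] := P_l_box v jH; lra.
Qed.

Lemma slack0 v : v != r -> 1 <= slack v 0.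
Proof. by move=> vr; rewrite (slackS v H_ge1) P_l1 // subr0 lerDl slack_ge0. Qed.

Lemma forced_mass_le_next y v k : (k < H)%N -> (forall u, y u <= 1 - l u k) ->
  forced_mass y v <= 1 - l v k.+1.
Proof.
move=> kH y_le; apply: bigmax_le; first by have /andP[_ ?] := P_l_box v kH; lra.
by move=> u uv; have := P_x_le_next uv kH; have := y_le u; lra.
Qed.

Lemma inflowD Y y v : (forall u, 0 <= Y u) -> (forall u, 0 <= y u) ->
  inflow Y v + inflow y v <= inflow (fun u => Y u + y u) v.
Proof.
move=> Y_ge0 y_ge0; rewrite /inflow -big_split /=; apply: ler_sum => u uv.
by apply: max0_subD => //; have /andP[_ ?] := P_x_box uv; lra.
Qed.

Lemma inflow_le1 Y v : (forall u, Y u <= 1) -> inflow Y v <= 1.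
Proof.
move=> Y_le1; case: P_x_constraints => X1 _ _ _; apply: le_trans (X1 v).
apply: ler_sum => u uv; have /andP[? ?] := P_x_box uv; have := Y_le1 u.
by rewrite ge_max => ?; apply/andP; split; lra.
Qed.

Record layer_inv k : Prop := LayerInv {
  layer_ge0 : forall v, 0 <= layer k v;
  layer_le : forall v, layer k v <= 1 - l v k;
  before_ge0 : forall v, 0 <= before k v;
  reached_le1 : forall v, reached k v <= 1;
  reached_root : reached k r = 1;
  reached_ge : forall v, v != r -> 1 - slack v k <= reached k v;
  reached_le : forall v, v != r ->
    reached k v <= Num.max (1 - slack v k) (inflow (before k) v) }.

Lemma layer_inv0 : layer_inv 0.
Proof.
split=> [v|v|v|v||v vr|v vr]; rewrite /before /layer /reached /= /root_mass.
- by rewrite ler0n.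
- have [->|_] := eqVneq v r; first by rewrite P_l_root0 subr0.
  by have /andP[_ ?] := P_l_box v (leq0n H); rewrite /=; lra.
- by rewrite subrr.
- by case: (v == r); rewrite ?ler01 ?ler0n.
- by rewrite eqxx.
- by rewrite (negbTE vr) /=; have := slack0 vr; lra.
- by rewrite (negbTE vr) le_max inflow_ge0 orbT.
Qed.

Lemma reached_le_step k v : (k < H)%N -> layer_inv k -> v != r ->
  reached k.+1 v <= Num.max (1 - slack v k.+1) (inflow (reached k) v).
Proof.
move=> kH Ik vr; rewrite reachedS layerS /next_layer (negbTE vr).
set F := forced_mass _ v; rewrite le_max.
case: (leP F (1 - reached k v - slack v k.+1)) => F_le.
  by apply/orP; left; lra.
have F_le_next : F <= 1 - l v k.+1 by apply: forced_mass_le_next => //; apply: layer_le.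
have := reached_le Ik vr; rewrite le_max => /orP[reached_slack|reached_inflow].
  by apply/orP; left; have := slackS v kH; lra.
apply/orP; right; apply: le_trans (lerD reached_inflow (forced_mass_le_inflow _ v)) _.
have -> : reached k = fun u => before k u + layer k u.
  by apply: funext => u; rewrite /before subrK.
by apply: inflowD; [apply: before_ge0 | apply: layer_ge0].
Qed.

Lemma layer_invS k : (k < H)%N -> layer_inv k -> layer_inv k.+1.
Proof.
move=> kH Ik.
have layerS_root : layer k.+1 r = 0 by rewrite layerS /next_layer eqxx.
have layerS_nonroot v : v != r -> layer k.+1 v =
    Num.max (forced_mass (layer k) v) (1 - reached k v - slack v k.+1).
  by move=> vr; rewrite layerS /next_layer (negbTE vr).
have reached_ge0 u : 0 <= reached k u.
  by have := before_ge0 Ik u; have := layer_ge0 Ik u; rewrite /before; lra.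
have reachedS_le v : v != r -> reached k.+1 v <= 1.
  move=> vr; apply: le_trans (reached_le_step kH Ik vr) _; rewrite ge_max.
  rewrite inflow_le1 ?andbT; last exact: reached_le1.
  by have := slack_ge0 v k.+1; lra.
split=> [v|v|v|v||v vr|v vr].
- have [->|vr] := eqVneq v r; first by rewrite layerS_root.
  by rewrite layerS_nonroot // le_max forced_mass_ge0.
- have [->|vr] := eqVneq v r.
    by rewrite layerS_root; have /andP[_ ?] := P_l_box r kH; lra.
  rewrite layerS_nonroot // ge_max forced_mass_le_next //; last exact: layer_le.
  by have := reached_ge Ik vr; have := slackS v kH; lra.
- by rewrite beforeS.
- have [->|vr] := eqVneq v r; last exact: reachedS_le.
  by rewrite reachedS layerS_root addr0 (reached_root Ik).
- by rewrite reachedS layerS_root addr0 (reached_root Ik).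
- rewrite reachedS layerS_nonroot //.
  have : 1 - reached k v - slack v k.+1 <=
      Num.max (forced_mass (layer k) v) (1 - reached k v - slack v k.+1).
    by rewrite le_max lexx orbT.
  lra.
- by rewrite beforeS; apply: reached_le_step.
Qed.

Lemma layer_inv_le k : (k <= H)%N -> layer_inv k.
Proof.
elim: k => [|k IHk] kH; first exact: layer_inv0.
by apply: layer_invS => //; apply: IHk; apply: ltnW.
Qed.

Lemma layer_box i v : (i <= H)%N -> 0 <= layer i v <= 1.
Proof.
move=> iH; have Ii := layer_inv_le iH.
have /andP[? _] := P_l_box v iH; have := layer_le Ii v; have := layer_ge0 Ii v.
by move=> *; apply/andP; split; lra.
Qed.

Lemma layer_total v : v != r -> \sum_(1 <= i < H.+1) layer i v = 1.
Proof.
move=> vr; have IH := layer_inv_le (leqnn H).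
have reachedH : reached H v = 1.
  apply/eqP; rewrite eq_le reached_le1 //=.
  by have := reached_ge IH vr; rewrite slack_last subr0.
by rewrite reached_sum big_ltn // layer0 /root_mass (negbTE vr) add0r in reachedH.
Qed.

Lemma in_A_layers : in_A c r H B x (fun v i => layer i v).
Proof.
split.
- split; first exact: P_x_constraints.
  split=> [|[|i] //= _]; first by rewrite layer0 /root_mass eqxx.
  by rewrite layerS /next_layer eqxx.
- move=> v vr; split; last exact: layer_total.
  by rewrite layer0 /root_mass (negbTE vr).
- move=> u v i uv iH; have [vr|vr] := eqVneq v r.
    rewrite vr layerS /next_layer eqxx subr0 P_x_to_root -?vr //.
    by have /andP[_ ?] := layer_box u (ltnW iH); lra.
  rewrite layerS /next_layer (negbTE vr).
  have := le_forced_mass (layer i) uv.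
  have : forced_mass (layer i) v <=
      Num.max (forced_mass (layer i) v) (1 - reached i v - slack v i.+1).
    by rewrite le_max lexx.
  lra.
- move=> u v uv; have [vr|vr] := eqVneq v r.
    by rewrite vr P_x_to_root -?vr // addr0; have /andP[_ ?] := layer_box u (leqnn H).
  by have := P_x_le_last uv vr; have := layer_le (layer_inv_le (leqnn H)) u; lra.
- by move=> v i iH; apply: layer_box.
Qed.

End Assignment.

Lemma nu_P_le_nu_A (R : realType) n (c : 'I_n -> 'I_n -> R) rho r H B :
  is_instance c rho H B -> nu_P c rho r H B <= nu_A c rho r H B.
Proof.
case=> _ rho_ge0 H_ge1 _; apply: (le_sup_subset (M := objective_ub rho r)).
  move=> _ [x [l [g P_lgx]] <-]; exists x => //.
  by exists (fun v i => layer r H x l i v); exact: in_A_layers P_lgx H_ge1.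
by move=> _ [x [y /in_A_box x_box] <-]; exact: objective_bounds.
Qed.

Section Example.
Variable R : realType.

Definition c3 (u v : 'I_3) : R := 1.

Definition rho3 (v : 'I_3) : R := (v == ord0)%:R.

(* The 3-cycle 0 -> 2 -> 1 -> 0 at value 1/2; nodes 1 and 2 sit half at depth 1
   and half at depth 2. *)
Definition x3 (u v : 'I_3) : R :=
  if [|| (u == 0 :> nat) && (v == 2 :> nat), (u == 2 :> nat) && (v == 1 :> nat)
      | (u == 1 :> nat) && (v == 0 :> nat)] then 1/2 else 0.

Definition y3 (v : 'I_3) (i : nat) : R :=
  if v == 0 :> nat then (i == 0)%:R else if (i == 1) || (i == 2) then 1/2 else 0.

Lemma instance3 : is_instance c3 rho3 2 2.
Proof. by split=> [u v _|v||]; rewrite ?ltr01 ?ler0n. Qed.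

Ltac ordcase u := case: u => [[|[|[|//]]] ?].

Lemma x_constraints3 : x_constraints c3 ord0 2 x3.
Proof.
split.
- move=> v; rewrite big_mkcond !big_ord_recl big_ord0 /=.
  by ordcase v; rewrite /x3 /=; lra.
- move=> v w; ordcase v; ordcase w => //= _ _;
    by rewrite big_mkcond !big_ord_recl big_ord0 /x3 /=; lra.
- by move=> u v; ordcase u; ordcase v => //= _; rewrite /x3 /=; lra.
- rewrite /c3; do 4 (rewrite ?big_mkcond ?big_ord_recl ?big_ord0 /=).
  by rewrite /x3 /=; lra.
Qed.

Lemma in_A3 : in_A c3 ord0 2 2 x3 y3.
Proof.
split.
- by split; [exact: x_constraints3 | split=> [|[|[|[|i]]]]].
- move=> v; ordcase v => //= _;
    by rewrite /y3 /= big_ltn // big_ltn // big_geq //=; lra.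
- move=> u v i; ordcase u; ordcase v => //= _; case: i => [|[|i]] //= _;
    by rewrite /y3 /x3 /=; lra.
- by move=> u v; ordcase u; ordcase v => //= _; rewrite /y3 /x3 /=; lra.
- by move=> v i; ordcase v; case: i => [|[|[|i]]] //= _; rewrite /y3 /=; lra.
Qed.

Lemma objective3 : objective rho3 ord0 x3 = 3/2.
Proof.
rewrite /objective; do 4 (rewrite ?big_mkcond ?big_ord_recl ?big_ord0 /=).
by rewrite /x3 /rho3 /=; lra.
Qed.

Lemma nu_P3_le1 : nu_P c3 rho3 ord0 2 2 <= 1.
Proof.
rewrite -[leRHS](sup1 (1 : R)); apply: (le_sup_subset (M := 1)); last first.
  by move=> _ ->; rewrite ler01 lexx.
move=> _ [x [l [g P_lgx]] <-]; apply: objective_root_revenue.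
  by move=> v /negbTE; rewrite /rho3 => ->.
exact: P_x_to_root P_lgx _.
Qed.

Lemma nu_A3_ge : 3/2 <= nu_A c3 rho3 ord0 2 2.
Proof.
have A3_x3 : [set objective rho3 ord0 x | x in
    [set x | exists y, in_A c3 ord0 2 2 x y]] (3/2).
  by exists x3; [exists y3; exact: in_A3 | exact: objective3].
apply: sup_upper_bound; last exact: A3_x3.
split; first by exists (3/2).
have [_ rho3_ge0 _ _] := instance3.
exists (objective_ub rho3 ord0).
by move=> _ [x [y /in_A_box/(objective_bounds ord0 rho3_ge0)/andP[_ ?]] <-].
Qed.

End Example.

Theorem theorem5 (R : realType) :
  (forall (n : nat) (c : 'I_n -> 'I_n -> R) (rho : 'I_n -> R) (r : 'I_n)
          (H : nat) (B : R),
      is_instance c rho H B -> nu_P c rho r H B <= nu_A c rho r H B) /\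
  (exists (n : nat) (c : 'I_n -> 'I_n -> R) (rho : 'I_n -> R) (r : 'I_n)
          (H : nat) (B : R),
      is_instance c rho H B /\ nu_P c rho r H B < nu_A c rho r H B).
Proof.
split; first exact: nu_P_le_nu_A.
exists 3%N, (@c3 R), (@rho3 R), ord0, 2%N, 2; split; first exact: instance3.
by apply: le_lt_trans (nu_P3_le1 R) (lt_le_trans _ (nu_A3_ge R)); lra.
Qed.
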